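(* Let $A_1,B_1,A_2,B_2\in\mathrm{SL}_2(\mathbb C)$ with $[A_1,B_1][A_2,B_2]=I$, where $[X,Y]=XYX^{-1}Y^{-1}$. Assume there exists $M\in\mathrm{SL}_2(\mathbb C)$ with $$MA_1M^{-1}=A_2,\qquad MB_1M^{-1}=B_2,\qquad M^2=-I.$$ Set $A=A_1$, $B=B_1$, $C_1=M$, $C_2=M^{-1}[A_1,B_1]$. Then $[A,B]=C_1C_2$, $\mathrm{trace}(C_1)=\mathrm{trace}(C_2)=0$, and $(A_1,B_1,A_2,B_2)=(A,\,B,\,C_1^{-1}AC_1,\,C_1^{-1}BC_1)$, i.e. $(A_1,B_1,A_2,B_2)=\pi^*(A,B,C_1,C_2)$. If moreover $\mathrm{trace}[A_1,B_1]\neq2$, then $(A_1,B_1,A_2,B_2)$ comes from a representation of the $5$-punctured sphere: up to simultaneous conjugation, there exist $M_0,M_1,M_t,M_\lambda,M_\infty\in\mathrm{SL}_2(\mathbb C)$ with $M_0M_1M_tM_\lambda M_\infty=I$ and all five of trace $0$, such that $A_1=M_1M_tM_\lambda$, $B_1=M_\lambda M_\infty$, $A_2=M_t^{-1}A_1M_t$, $B_2=M_t^{-1}B_1M_t$.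
   Context: Representation spaces: $\tilde{\mathcal R}_{1/2}$ is the set of $(A,B,C_1,C_2)\in\mathrm{SL}_2(\mathbb C)^4$ with $[A,B]=C_1C_2$ and $\mathrm{trace}(C_1)=\mathrm{trace}(C_2)=0$, modulo simultaneous conjugation (monodromy of connections on an elliptic curve with two poles of exponent $\frac12$); $\mathcal R'$ is the set of $(A_1,B_1,A_2,B_2)\in\mathrm{SL}_2(\mathbb C)^4$ with $[A_1,B_1][A_2,B_2]=I$ modulo simultaneous conjugation (monodromy of genus $2$ curves). The map $\pi^*:\tilde{\mathcal R}_{1/2}\to\mathcal R'$, induced by the double cover of the elliptic curve branched at the two poles, is $\pi^*(A,B,C_1,C_2)=(A,B,C_1^{-1}AC_1,C_1^{-1}BC_1)$. A representation of the $5$-punctured sphere with all exponents $\frac12$ is a quintuple $(M_0,M_1,M_t,M_\lambda,M_\infty)$ of traceless matrices in $\mathrm{SL}_2(\mathbb C)$ with product $I$; it is sent into $\tilde{\mathcal R}_{1/2}$ and then by $\pi^*$ into $\mathcal R'$ via the formulas in the claim. *)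

From HB Require Import structures.
From mathcomp Require Import all_boot all_order all_algebra.
From mathcomp Require Import reals.
From mathcomp.real_closed Require Import complex.

Set Implicit Arguments.
Unset Strict Implicit.
Unset Printing Implicit Defensive.

Import GRing.Theory.
Local Open Scope ring_scope.

Notation M2 R := ('M[(complex R)]_2).

Definition SL2 {R : realType} (X : M2 R) : Prop := \det X = 1.

Definition comm {R : realType} (X Y : M2 R) : M2 R :=
  X *m Y *m invmx X *m invmx Y.

From HB Require Import structures.
From mathcomp Require Import all_boot all_order all_algebra.
From mathcomp Require Import reals.
From mathcomp.real_closed Require Import complex.
From mathcomp Require Import ring.

Set Implicit Arguments.
Unset Strict Implicit.
Unset Printing Implicit Defensive.

Import GRing.Theory Num.Theory.
Local Open Scope ring_scope.

(** Write K = [A1,B1].  The relation [A1,B1][A2,B2] = I says M K M^-1 = K^-1,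
    i.e. (K M)^2 = M^2 = -I, and an SL_2 matrix squaring to -I is traceless;
    this gives tr C1 = tr C2 = 0.  For the sphere take M_t = M and M_lambda
    the normalisation of L = B A B^-1 - A = (K^-1 - I) A, which is traceless
    with det L = 2 - tr K != 0.  The remaining three matrices are forced by the
    required products, and their traces vanish by cyclicity of the trace and
    Cayley-Hamilton (A B A B^-1 = tr A . A - K). *)

Section Matrix22.
Variable F : comUnitRingType.
Implicit Types X Y : 'M[F]_2.

Let ord0E : ord0 = 0 :> 'I_2. Proof. exact: val_inj. Qed.
Let lift0E (k : 'I_1) : lift 0 k = 1 :> 'I_2.
Proof. by rewrite (ord1 k); apply/val_inj. Qed.
Let lift1E (k : 'I_1) : lift 1 k = 0 :> 'I_2.
Proof. by rewrite (ord1 k); apply/val_inj. Qed.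

Lemma mx22P X Y :
  X 0 0 = Y 0 0 -> X 0 1 = Y 0 1 -> X 1 0 = Y 1 0 -> X 1 1 = Y 1 1 -> X = Y.
Proof.
move=> h00 h01 h10 h11; apply/matrixP => i j.
have ord2 (k : 'I_2) : k = 0 \/ k = 1.
  by case: k => -[|[|//]] ?; [left | right]; apply/val_inj.
by case: (ord2 i) (ord2 j) => -> [] ->.
Qed.

Lemma mulmx22E X Y i j : (X *m Y) i j = X i 0 * Y 0 j + X i 1 * Y 1 j.
Proof. by rewrite !mxE !big_ord_recl big_ord0 addr0 ord0E !lift0E. Qed.

Lemma mxtrace22 X : \tr X = X 0 0 + X 1 1.
Proof. by rewrite /mxtrace !big_ord_recl big_ord0 addr0 ord0E !lift0E. Qed.

Lemma det_mx22 X : \det X = X 0 0 * X 1 1 - X 0 1 * X 1 0.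
Proof.
rewrite (expand_det_row _ 0) !big_ord_recl big_ord0 /cofactor !det_mx11 !mxE.
by rewrite ord0E !lift0E lift1E /= expr0 expr1; ring.
Qed.

Lemma scalar_mx22E (a : F) i j : (a%:M : 'M[F]_2) i j = (i == j)%:R * a.
Proof. by rewrite !mxE mulr_natl. Qed.

Lemma Cayley_Hamilton22 X : X *m X = \tr X *: X - (\det X)%:M.
Proof.
by apply: mx22P; rewrite !(mulmx22E, mxtrace22, det_mx22, scalar_mx22E, mxE) /=;
  ring.
Qed.

Lemma mulmx1_invmx n (X Y : 'M[F]_n) : X *m Y = 1%:M -> invmx X = Y.
Proof.
by move=> XY; have [uX _] := mulmx1_unit XY; rewrite -[Y](mulKmx uX) XY mulmx1.
Qed.

Lemma invmx_conj n (P X : 'M[F]_n) : P \in unitmx -> X \in unitmx ->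
  invmx (P *m X *m invmx P) = P *m invmx X *m invmx P.
Proof.
move=> uP uX; apply: mulmx1_invmx.
by rewrite !mulmxA (mulmxKV uP) (mulmxK uX) (mulmxV uP).
Qed.

Lemma unitmx_det1 X : \det X = 1 -> X \in unitmx.
Proof. by move=> dX; rewrite unitmxE dX unitr1. Qed.

Lemma invmx_det1 X : \det X = 1 -> invmx X = (\tr X)%:M - X.
Proof.
move=> dX; apply: mulmx1_invmx.
by rewrite mulmxBr Cayley_Hamilton22 mul_mx_scalar dX opprB addrC subrK.
Qed.

Lemma mxtrace_invmx_det1 X : \det X = 1 -> \tr (invmx X) = \tr X.
Proof. by move=> dX; rewrite invmx_det1 // raddfB /= mxtrace_scalar; ring. Qed.

Lemma det_subr1_det1 X : \det X = 1 -> \det (X - 1%:M) = 2 - \tr X.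
Proof.
have -> : \det (X - 1%:M) = \det X + 1 - \tr X.
  by rewrite !det_mx22 mxtrace22 !mxE /=; ring.
by move->.
Qed.

Lemma invmx_mxtrace0 X : \det X = 1 -> \tr X = 0 -> invmx X = - X.
Proof. by move=> dX trX; rewrite invmx_det1 // trX raddf0 sub0r. Qed.

End Matrix22.

Lemma mxtrace_sqrN1 (F : idomainType) (X : 'M[F]_2) :
  \det X = 1 -> X *m X = - 1%:M -> \tr X = 0.
Proof.
move=> dX XX; have : \tr X ^+ 2 == 0.
  have -> : \tr X ^+ 2 = \tr (X *m X) + 2 * \det X.
    by rewrite !mxtrace22 !mulmx22E det_mx22; ring.
  by rewrite XX dX raddfN /= mxtrace1 mulr1 addNr.
by rewrite expf_eq0 => /eqP.
Qed.

Definition conj_diff {F : comUnitRingType} {n : nat} (A B : 'M[F]_n) :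
  'M[F]_n := B *m A *m invmx B - A.

Section ConjDiff.
Variables (F : comUnitRingType) (n : nat) (A B : 'M[F]_n).
Hypotheses (uA : A \in unitmx) (uB : B \in unitmx).

Lemma mxtrace_conj_diff : \tr (conj_diff A B) = 0.
Proof. by rewrite raddfB /= mxtrace_mulC mulmxA (mulVmx uB) mul1mx subrr. Qed.

Lemma mxtrace_conj_diff_mulmx : \tr (conj_diff A B *m B) = 0.
Proof. by rewrite mulmxBl (mulmxKV uB) raddfB /= mxtrace_mulC subrr. Qed.

Lemma mxtrace_conj_diff_conj : \tr (invmx B *m conj_diff A B *m invmx A) = 0.
Proof.
rewrite mulmxBr mulmxBl !mulmxA (mulVmx uB) mul1mx (mulmxK uA) raddfB /=.
by rewrite mxtrace_mulC mulmxA (mulVmx uA) mul1mx subrr.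
Qed.

Lemma conj_diff_comm :
  conj_diff A B = (invmx (A *m B *m invmx A *m invmx B) - 1%:M) *m A.
Proof.
have -> : invmx (A *m B *m invmx A *m invmx B) = B *m A *m invmx B *m invmx A.
  apply: mulmx1_invmx.
  by rewrite !mulmxA (mulmxKV uB) (mulmxKV uA) (mulmxK uB) (mulmxV uA).
by rewrite mulmxBl mul1mx (mulmxKV uA).
Qed.

End ConjDiff.

Section ConjDiff22.
Variables (F : comUnitRingType) (A B : 'M[F]_2).
Hypotheses (dA : \det A = 1) (dB : \det B = 1).
Let uA := unitmx_det1 dA.
Let uB := unitmx_det1 dB.
Let K := A *m B *m invmx A *m invmx B.

Lemma det_conj_diff : \det (conj_diff A B) = 2 - \tr K.
Proof.
have dK : \det K = 1 by rewrite !det_mulmx !det_inv dA dB invr1 !mulr1.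
rewrite conj_diff_comm // det_mulmx dA mulr1 det_subr1_det1.
  by rewrite mxtrace_invmx_det1.
by rewrite det_inv dK invr1.
Qed.

Lemma mxtrace_mul_conj_diff N :
  \tr (A *m conj_diff A B *m N) = \tr N - \tr (N *m K).
Proof.
have AA : A *m A = \tr A *: A - 1%:M by rewrite Cayley_Hamilton22 dA.
have ABABV : A *m (B *m A *m invmx B) = \tr A *: A - K.
  have KBA : K *m B *m A = A *m B by rewrite /K (mulmxKV uB) (mulmxKV uA).
  have -> : A *m (B *m A *m invmx B) = K *m B *m (A *m A) *m invmx B.
    by rewrite !mulmxA KBA.
  rewrite AA mulmxBr mulmx1 mulmxBl (mulmxK uB) -scalemxAr -scalemxAl KBA.
  by rewrite (mulmxK uB).
rewrite mulmxBr ABABV AA !mulmxBl mul1mx -!scalemxAl !raddfB /= !mxtraceZ.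
by rewrite [\tr (K *m N)]mxtrace_mulC; ring.
Qed.

End ConjDiff22.

Lemma mxtrace_mul_sqrN1 (F : idomainType) (K M : 'M[F]_2) :
  \det K = 1 -> \det M = 1 -> M *m M = - 1%:M ->
  K *m (M *m K *m invmx M) = 1%:M -> \tr (K *m M) = 0.
Proof.
move=> dK dM MM KMKV; apply: mxtrace_sqrN1.
  by rewrite det_mulmx dK dM mulr1.
rewrite (invmx_mxtrace0 dM (mxtrace_sqrN1 dM MM)) in KMKV.
by rewrite -KMKV !mulmxN opprK !mulmxA.
Qed.

Lemma det_scale_invsqrtC (F : numClosedFieldType) (X : 'M[F]_2) :
  \det X != 0 -> \det ((sqrtC (\det X))^-1 *: X) = 1.
Proof. by move=> dX; rewrite detZ exprVn sqrtCK mulVf. Qed.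

Lemma punctured_sphere_factorization (F : numClosedFieldType)
    (A B M : 'M[F]_2) :
  \det A = 1 -> \det B = 1 -> \det M = 1 -> \tr M = 0 ->
  \tr (M *m (A *m B *m invmx A *m invmx B)) = 0 ->
  \tr (A *m B *m invmx A *m invmx B) != 2 ->
  exists M0 M1 Ml Minf : 'M[F]_2,
  [/\ [/\ \det M0 = 1, \det M1 = 1, \det Ml = 1 & \det Minf = 1],
      M0 *m M1 *m M *m Ml *m Minf = 1%:M,
      [/\ \tr M0 = 0, \tr M1 = 0, \tr Ml = 0 & \tr Minf = 0],
      M1 *m M *m Ml = A & Ml *m Minf = B].
Proof.
move=> dA dB dM trM trMK trK.
have uA := unitmx_det1 dA; have uB := unitmx_det1 dB.
have uM := unitmx_det1 dM.
have dL : \det (conj_diff A B) != 0 by rewrite det_conj_diff // subr_eq0 eq_sym.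
set Ml := (sqrtC (\det (conj_diff A B)))^-1 *: conj_diff A B.
have dMl : \det Ml = 1 := det_scale_invsqrtC dL.
have trMl : \tr Ml = 0 by rewrite mxtraceZ mxtrace_conj_diff ?mulr0.
have uMl := unitmx_det1 dMl.
exists (invmx B *m Ml *m invmx A), (A *m invmx Ml *m invmx M), Ml,
  (invmx Ml *m B).
split.
- by split; rewrite ?det_mulmx ?det_inv ?dA ?dB ?dM ?dMl ?invr1 ?mulr1.
- by rewrite !mulmxA !(mulmxKV uA, mulmxK uMl, mulmxKV uM) (mulVmx uB).
- split=> //.
  + by rewrite -scalemxAr -scalemxAl mxtraceZ mxtrace_conj_diff_conj ?mulr0.
  + rewrite (invmx_mxtrace0 dMl trMl) (invmx_mxtrace0 dM trM).
    rewrite !mulmxN mulNmx opprK -scalemxAr -scalemxAl mxtraceZ.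
    by rewrite mxtrace_mul_conj_diff // trM trMK subrr mulr0.
  + rewrite (invmx_mxtrace0 dMl trMl) mulNmx raddfN /= -scalemxAl mxtraceZ.
    by rewrite mxtrace_conj_diff_mulmx ?mulr0 ?oppr0.
- by rewrite (mulmxKV uM) (mulmxKV uMl).
- by rewrite mulmxA (mulmxV uMl) mul1mx.
Qed.

Lemma comm_conj (R : realType) (P X Y : M2 R) :
  P \in unitmx -> X \in unitmx -> Y \in unitmx ->
  comm (P *m X *m invmx P) (P *m Y *m invmx P) = P *m comm X Y *m invmx P.
Proof.
by move=> uP uX uY; rewrite /comm !invmx_conj // !mulmxA !(mulmxKV uP).
Qed.

Theorem mainTheorem4 (R : realType) (A1 B1 A2 B2 M : M2 R) :
  SL2 A1 -> SL2 B1 -> SL2 A2 -> SL2 B2 ->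
  comm A1 B1 *m comm A2 B2 = 1%:M ->
  SL2 M ->
  M *m A1 *m invmx M = A2 ->
  M *m B1 *m invmx M = B2 ->
  M *m M = - 1%:M ->
  (let A := A1 in let B := B1 in let C1 := M in
   let C2 := invmx M *m comm A1 B1 in
   [/\ comm A B = C1 *m C2, \tr C1 = 0, \tr C2 = 0,
       SL2 C1 /\ SL2 C2 &
       (A1, B1, A2, B2) = (A, B, invmx C1 *m A *m C1, invmx C1 *m B *m C1)])
  /\
  (\tr (comm A1 B1) != 2 ->
   exists (P M0 M1 Mt Ml Minf : M2 R),
     SL2 P /\ [/\ SL2 M0, SL2 M1, SL2 Mt, SL2 Ml & SL2 Minf] /\
     M0 *m M1 *m Mt *m Ml *m Minf = 1%:M /\
     [/\ \tr M0 = 0, \tr M1 = 0, \tr Mt = 0, \tr Ml = 0 & \tr Minf = 0] /\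
     [/\ P *m A1 *m invmx P = M1 *m Mt *m Ml,
         P *m B1 *m invmx P = Ml *m Minf,
         P *m A2 *m invmx P = invmx Mt *m (P *m A1 *m invmx P) *m Mt &
         P *m B2 *m invmx P = invmx Mt *m (P *m B1 *m invmx P) *m Mt]).
Proof.
rewrite /SL2 => dA1 dB1 _ _ hK dM hA2 hB2 MM.
have uM := unitmx_det1 dM.
have trM : \tr M = 0 := mxtrace_sqrN1 dM MM.
have iM : invmx M = - M := invmx_mxtrace0 dM trM.
have dK : \det (comm A1 B1) = 1.
  by rewrite !det_mulmx !det_inv dA1 dB1 invr1 !mulr1.
have trMK : \tr (M *m comm A1 B1) = 0.
  rewrite mxtrace_mulC; apply: mxtrace_mul_sqrN1 => //.
  by rewrite -hA2 -hB2 comm_conj ?unitmx_det1 in hK.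
have conjVM X : M *m X *m invmx M = invmx M *m X *m M.
  by rewrite iM mulmxN !mulNmx.
split.
  split => //.
  - by rewrite mulKVmx.
  - by rewrite iM mulNmx raddfN /= trMK oppr0.
  - by split=> //; rewrite det_mulmx det_inv dM dK invr1 mulr1.
  - by rewrite -hA2 -hB2 !conjVM.
move=> trK.
have [M0 [M1 [Ml [Minf [dets prod traces hA1 hB1]]]]] :=
  punctured_sphere_factorization dA1 dB1 dM trM trMK trK.
case: dets traces => dM0 dM1 dMl dMinf [trM0 trM1 trMl trMinf].
exists 1%:M, M0, M1, M, Ml, Minf; rewrite invmx1 !mul1mx !mulmx1.
split; first exact: det1.
by do !split; rewrite -?hA2 -?hB2 ?conjVM ?hA1 ?hB1.
Qed.
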